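(* Let $C\in C^1(I;\mathbb R^n)$ satisfy $|\partial_\theta C(\theta,v)|=l(v)$ for all $(\theta,v)$, where $l:[0,1]\to(0,\infty)$ is continuous, and set $f(\theta,v)=\langle T(\theta,v),\partial_vC(\theta,v)\rangle$. For $\varphi\in C^1([0,1];\mathbb R)$ let $\widetilde C_\varphi(\theta,v)=C(\theta+\varphi(v),v)$. Then $$\inf_{\varphi}\int_I|\pi_{\widetilde T}\,\partial_v\widetilde C_\varphi|^2\,d\theta\,dv=\int_0^1\int_{S^1}\Big(f(\theta,v)-\frac1{2\pi}\int_{S^1}f(s,v)\,ds\Big)^2d\theta\,dv,$$ where $\widetilde T$ denotes the unit tangent of $\widetilde C_\varphi$.
   Context: $S^1=\mathbb R/2\pi\mathbb Z$, $I=S^1\times[0,1]$; $T=\partial_\theta C/|\partial_\theta C|$; $\pi_T w=\langle w,T\rangle T$. *)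

From Stdlib Require Import Reals.
From Coquelicot Require Import Coquelicot.
Open Scope R_scope.

(* Vectors in R^n are represented as functions nat -> R, only the
   coordinates 0 .. n-1 being relevant. *)
Fixpoint sumR (n : nat) (a : nat -> R) : R :=
  match n with O => 0 | S m => sumR m a + a m end.

Definition dotn (n : nat) (u w : nat -> R) : R := sumR n (fun k => u k * w k).
Definition normn (n : nat) (u : nat -> R) : R := sqrt (dotn n u u).
Definition scalev (c : R) (u : nat -> R) : nat -> R := fun k => c * u k.

Definition unitv (n : nat) (u : nat -> R) : nat -> R := scalev (/ normn n u) u.

Definition projT (n : nat) (t w : nat -> R) : nat -> R := scalev (dotn n w t) t.

Definition inI (v : R) : Prop := 0 <= v <= 1.

(* joint continuity on S^1 x [0,1] (theta in R, periodic functions) *)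
Definition cont_I (g : R -> R -> R) : Prop :=
  forall th v, inI v ->
    filterlim (fun p : R * R => g (fst p) (snd p))
      (within (fun p : R * R => inI (snd p)) (locally (th, v)))
      (locally (g th v)).

Definition cont_01 (g : R -> R) : Prop :=
  forall v, inI v -> filterlim g (within inI (locally v)) (locally (g v)).

Definition is_deriv_01 (g : R -> R) (v d : R) : Prop :=
  filterlim (fun h => (g (v + h) - g v) / h)
    (within (fun h => h <> 0 /\ inI (v + h)) (locally 0)) (locally d).

Definition is_pderivs (n : nat) (C Dt Dv : R -> R -> nat -> R) : Prop :=
  forall th v, inI v -> forall k, (k < n)%nat ->
    is_derive (fun s => C s v k) th (Dt th v k) /\
    is_deriv_01 (fun w => C th w k) v (Dv th v k).

Definition C1_I (n : nat) (C Dt Dv : R -> R -> nat -> R) : Prop :=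
  (forall th v, inI v -> forall k, C (th + 2 * PI) v k = C th v k) /\
  is_pderivs n C Dt Dv /\
  (forall k, (k < n)%nat ->
     cont_I (fun th v => C th v k) /\ cont_I (fun th v => Dt th v k) /\
     cont_I (fun th v => Dv th v k)).

Definition C1_01 (phi dphi : R -> R) : Prop :=
  (forall v, inI v -> is_deriv_01 phi v (dphi v)) /\ cont_01 phi /\ cont_01 dphi.

Definition reparam (C : R -> R -> nat -> R) (phi : R -> R) : R -> R -> nat -> R :=
  fun th v k => C (th + phi v) v k.

Definition int_I (g : R -> R -> R) : R :=
  RInt (fun v => RInt (fun th => g th v) 0 (2 * PI)) 0 1.

Definition energy (n : nat) (Dt' Dv' : R -> R -> nat -> R) : R :=
  int_I (fun th v =>
    let t := unitv n (Dt' th v) in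
    normn n (projT n t (Dv' th v)) ^ 2).

From Stdlib Require Import Reals Lra Lia.
From Coquelicot Require Import Coquelicot.
Open Scope R_scope.

(* Reparametrising by [phi] keeps the speed [l] and turns the tangential
   component of [d_v C] at [(th, v)] into [f(th + phi v, v) + phi'(v) l(v)].
   By periodicity the shift [phi v] disappears from the [th]-integral, and the
   Pythagorean identity for the mean [M(v)] of [f(., v)] gives
   [energy = int_I (f - M)^2 + 2 pi int_0^1 (phi' l + M)^2].  Hence the energy
   is at least the right-hand side, with equality for [phi' = - M / l]. *)

Lemma ball_R (x e y : R) : @ball R_UniformSpace x e y <-> Rabs (y - x) < e.
Proof. reflexivity. Qed.

Lemma cont_I_epsilon g th v : cont_I g -> inI v -> forall eps, 0 < eps ->
  exists d, 0 < d /\ forall th' v', inI v' -> Rabs (th' - th) < d -> Rabs (v' - v) < d ->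
    Rabs (g th' v' - g th v) < eps.
Proof.
  intros Hg Hv eps Heps.
  destruct (proj1 (filterlim_locally _ _) (Hg th v Hv) (mkposreal eps Heps)) as [d Hd].
  exists d; split; [apply cond_pos|].
  intros th' v' Hv' Hth Hvv. apply (Hd (th', v')); [split; apply ball_R|]; auto.
Qed.

Lemma cont_01_epsilon g v : cont_01 g -> inI v -> forall eps, 0 < eps ->
  exists d, 0 < d /\ forall v', inI v' -> Rabs (v' - v) < d -> Rabs (g v' - g v) < eps.
Proof.
  intros Hg Hv eps Heps.
  destruct (proj1 (filterlim_locally _ _) (Hg v Hv) (mkposreal eps Heps)) as [d Hd].
  exists d; split; [apply cond_pos|].
  intros v' Hv' Hvv. apply (Hd v'); [apply ball_R|]; auto.
Qed.

Lemma is_deriv_01_epsilon g v d : is_deriv_01 g v d <-> forall eps, 0 < eps ->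
  exists del, 0 < del /\ forall h, h <> 0 -> inI (v + h) -> Rabs h < del ->
    Rabs ((g (v + h) - g v) / h - d) < eps.
Proof.
  split.
  - intros Hg eps Heps.
    destruct (proj1 (filterlim_locally _ _) Hg (mkposreal eps Heps)) as [del Hd].
    exists del; split; [apply cond_pos|].
    intros h Hh0 Hh Hhdel. apply (Hd h); [apply ball_R; rewrite Rminus_0_r|]; auto.
  - intros Hg. apply filterlim_locally. intros [eps Heps].
    destruct (Hg eps Heps) as [del [Hdel Hd]].
    exists (mkposreal del Hdel). intros h Hh [Hh0 Hvh].
    apply Hd; auto. rewrite <- (Rminus_0_r h). exact Hh.
Qed.

Lemma continuous_epsilon (q : R -> R) y : continuous q y <-> forall eps, 0 < eps ->
  exists d, 0 < d /\ forall v, Rabs (v - y) < d -> Rabs (q v - q y) < eps.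
Proof.
  split.
  - intros Hq eps Heps.
    destruct (proj1 (filterlim_locally _ _) Hq (mkposreal eps Heps)) as [[d Hd] Hball].
    exists d; split; auto.
  - intros Hq. apply filterlim_locally. intros [eps Heps].
    destruct (Hq eps Heps) as [d [Hd Hball]].
    exists (mkposreal d Hd). exact Hball.
Qed.

Lemma continuity_2d_pt_epsilon h x y : continuity_2d_pt h x y <-> forall eps, 0 < eps ->
  exists d, 0 < d /\ forall u v, Rabs (u - x) < d -> Rabs (v - y) < d ->
    Rabs (h u v - h x y) < eps.
Proof.
  split.
  - intros Hh eps Heps. destruct (Hh (mkposreal eps Heps)) as [[d Hd] Hball].
    exists d; split; auto.
  - intros Hh [eps Heps]. destruct (Hh eps Heps) as [d [Hd Hball]].
    exists (mkposreal d Hd). exact Hball.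
Qed.

Lemma continuity_2d_pt_continuous_l h x y :
  continuity_2d_pt h x y -> continuous (fun u => h u y) x.
Proof.
  intros Hh. apply continuous_epsilon. intros eps Heps.
  destruct (proj1 (continuity_2d_pt_epsilon _ _ _) Hh eps Heps) as [d [Hd Hball]].
  exists d; split; auto. intros u Hu. apply Hball; auto.
  rewrite Rminus_eq_0, Rabs_R0; auto.
Qed.

Lemma continuity_2d_pt_continuous_r (q : R -> R) x y :
  continuous q y -> continuity_2d_pt (fun _ v => q v) x y.
Proof.
  intros Hq. apply continuity_2d_pt_epsilon. intros eps Heps.
  destruct (proj1 (continuous_epsilon _ _) Hq eps Heps) as [d [Hd Hball]].
  exists d; split; auto.
Qed.

Lemma continuity_2d_pt_sumR n (a : nat -> R -> R -> R) x y :
  (forall k, (k < n)%nat -> continuity_2d_pt (a k) x y) ->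
  continuity_2d_pt (fun u v => sumR n (fun k => a k u v)) x y.
Proof.
  induction n as [|n IH]; intros Ha; simpl.
  - apply continuity_2d_pt_const.
  - apply continuity_2d_pt_plus; [apply IH; intros|]; apply Ha; lia.
Qed.

Lemma continuous_Rmult (f g : R -> R) x :
  continuous f x -> continuous g x -> continuous (fun y => f y * g y) x.
Proof. exact (continuous_mult f g x). Qed.

Lemma continuous_Rplus (f g : R -> R) x :
  continuous f x -> continuous g x -> continuous (fun y => f y + g y) x.
Proof. exact (continuous_plus f g x). Qed.

Lemma continuous_Rsqr (f : R -> R) x : continuous f x -> continuous (fun y => f y ^ 2) x.
Proof.
  intros Hf. apply (continuous_ext (fun y => f y * f y)); [intros; simpl; ring|].
  apply continuous_Rmult; auto.
Qed.

(* [clamp] retracts [R] onto [0,1]; composing with it extends functions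
   continuous on [0,1] to functions continuous on [R]. *)
Definition clamp (v : R) : R := Rmax 0 (Rmin 1 v).

Lemma inI_clamp v : inI (clamp v).
Proof. unfold clamp, inI, Rmax, Rmin. repeat destruct Rle_dec; lra. Qed.

Lemma clamp_id v : inI v -> clamp v = v.
Proof. unfold clamp, inI, Rmax, Rmin. intros. repeat destruct Rle_dec; lra. Qed.

Lemma clamp_lipschitz a b : Rabs (clamp a - clamp b) <= Rabs (a - b).
Proof.
  unfold clamp, Rmax, Rmin. repeat destruct Rle_dec;
  unfold Rabs; repeat destruct Rcase_abs; lra.
Qed.

Lemma cont_I_clamp g x y : cont_I g -> continuity_2d_pt (fun a b => g a (clamp b)) x y.
Proof.
  intros Hg. apply continuity_2d_pt_epsilon. intros eps Heps.
  destruct (cont_I_epsilon g x (clamp y) Hg (inI_clamp y) eps Heps) as [d [Hd Hball]].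
  exists d; split; auto. intros u v Hu Hv.
  apply Hball; auto using inI_clamp. eapply Rle_lt_trans; [apply clamp_lipschitz|]; auto.
Qed.

Lemma cont_01_clamp g y : cont_01 g -> continuous (fun b => g (clamp b)) y.
Proof.
  intros Hg. apply continuous_epsilon. intros eps Heps.
  destruct (cont_01_epsilon g (clamp y) Hg (inI_clamp y) eps Heps) as [d [Hd Hball]].
  exists d; split; auto. intros v Hv.
  apply Hball; auto using inI_clamp. eapply Rle_lt_trans; [apply clamp_lipschitz|]; auto.
Qed.

Lemma cont_01_continuous g : (forall v, continuous g v) -> cont_01 g.
Proof. intros Hg v _. eapply filterlim_filter_le_1; [apply filter_le_within| apply Hg]. Qed.

Lemma inI_exists_step v d : inI v -> 0 < d -> exists h, h <> 0 /\ inI (v + h) /\ Rabs h < d.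
Proof.
  unfold inI; intros Hv Hd.
  set (m := Rmin d 1 / 2).
  assert (Hm : 0 < m /\ m < d /\ m <= 1 / 2).
  { unfold m. pose proof (Rmin_l d 1). pose proof (Rmin_r d 1).
    assert (0 < Rmin d 1) by (apply Rmin_pos; lra). lra. }
  destruct (Rle_dec v (1 / 2)).
  - exists m. rewrite Rabs_pos_eq by lra. repeat split; lra.
  - exists (- m). rewrite Rabs_Ropp, Rabs_pos_eq by lra. repeat split; lra.
Qed.

Lemma is_deriv_01_unique g v d1 d2 :
  inI v -> is_deriv_01 g v d1 -> is_deriv_01 g v d2 -> d1 = d2.
Proof.
  intros Hv H1 H2. refine (filterlim_locally_unique _ _ _ H1 H2).
  split; [|apply within_filter, locally_filter].
  intros [[d Hd] Hball].
  destruct (inI_exists_step v d Hv Hd) as [h [Hh0 [Hvh Hhd]]].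
  apply (Hball h); [rewrite ball_R, Rminus_0_r|]; auto.
Qed.

Lemma is_derive_is_deriv_01 g v d : is_derive g v d -> is_deriv_01 g v d.
Proof.
  intros Hg. apply is_derive_Reals in Hg.
  apply is_deriv_01_epsilon. intros eps Heps.
  destruct (Hg eps Heps) as [del Hdel].
  exists del. split; [apply cond_pos|]. intros h Hh0 _ Hh. apply Hdel; auto.
Qed.

Lemma is_deriv_01_ext g g' v d : inI v -> (forall w, inI w -> g w = g' w) ->
  is_deriv_01 g v d -> is_deriv_01 g' v d.
Proof.
  intros Hv Hgg' Hg. apply is_deriv_01_epsilon. intros eps Heps.
  destruct (proj1 (is_deriv_01_epsilon _ _ _) Hg eps Heps) as [del [Hdel Hball]].
  exists del; split; auto. intros h Hh0 Hvh Hh.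
  rewrite <- !Hgg'; auto.
Qed.

Lemma is_deriv_01_plus_const g c v d : is_deriv_01 g v d -> is_deriv_01 (fun w => c + g w) v d.
Proof.
  intros Hg. refine (filterlim_ext _ _ _ Hg). intros h. f_equal. ring.
Qed.

Lemma is_derive_shift (g : R -> R) c th d :
  is_derive g (th + c) d -> is_derive (fun s => g (s + c)) th d.
Proof.
  intros Hg.
  assert (Hs : is_derive (fun s => s + c) th 1).
  { apply is_derive_Reals. replace 1 with (1 + 0) by ring.
    apply derivable_pt_lim_plus; [apply derivable_pt_lim_id| apply derivable_pt_lim_const]. }
  replace d with (scal 1 d) by (unfold scal; simpl; unfold mult; simpl; ring).
  exact (is_derive_comp g (fun s => s + c) th d 1 Hg Hs).
Qed.

(* Joint continuity of [DF] is what makes the mean-value estimate uniform in [w]. *)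
Lemma increment_l_uniform (F DF : R -> R -> R) a v :
  (forall s w, inI w -> is_derive (fun s => F s w) s (DF s w)) ->
  cont_I DF -> inI v -> forall eps, 0 < eps ->
  exists d, 0 < d /\ forall b w, inI w -> Rabs (b - a) < d -> Rabs (w - v) < d ->
    Rabs (F b w - F a w - DF a v * (b - a)) <= eps * Rabs (b - a).
Proof.
  intros HF HDF Hv eps Heps.
  destruct (cont_I_epsilon DF a v HDF Hv eps Heps) as [d [Hd Hball]].
  exists d; split; auto. intros b w Hw Hb Hwv.
  destruct (MVT_cor4 (fun s => F s w) (fun s => DF s w) a (Rabs (b - a)))
    with (b := b) as [c [Hmvt Hca]]; [intros; apply HF; auto| lra|].
  simpl in Hmvt. rewrite Hmvt.
  replace (DF c w * (b - a) - DF a v * (b - a)) with ((DF c w - DF a v) * (b - a)) by ring.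
  rewrite Rabs_mult. apply Rmult_le_compat_r; [apply Rabs_pos|].
  left. apply Hball; auto. lra.
Qed.

Lemma is_deriv_01_plus g k v dg dk :
  is_deriv_01 g v dg -> is_deriv_01 k v dk -> is_deriv_01 (fun w => g w + k w) v (dg + dk).
Proof.
  intros Hg Hk. apply is_deriv_01_epsilon. intros eps Heps.
  destruct (proj1 (is_deriv_01_epsilon _ _ _) Hg (eps / 2)) as [dlg [Hdlg Hqg]]; [lra|].
  destruct (proj1 (is_deriv_01_epsilon _ _ _) Hk (eps / 2)) as [dlk [Hdlk Hqk]]; [lra|].
  exists (Rmin dlg dlk). split; [apply Rmin_pos; auto|].
  intros h Hh0 Hvh Hh.
  specialize (Hqg h Hh0 Hvh (Rlt_le_trans _ _ _ Hh (Rmin_l _ _))).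
  specialize (Hqk h Hh0 Hvh (Rlt_le_trans _ _ _ Hh (Rmin_r _ _))).
  replace ((g (v + h) + k (v + h) - (g v + k v)) / h - (dg + dk)) with
    (((g (v + h) - g v) / h - dg) + ((k (v + h) - k v) / h - dk)) by (field; auto).
  eapply Rle_lt_trans; [apply Rabs_triang| lra].
Qed.

Lemma Rabs_div_le x h c : h <> 0 -> Rabs x <= c * Rabs h -> Rabs (x / h) <= c.
Proof.
  intros Hh Hx. unfold Rdiv. rewrite Rabs_mult, Rabs_inv.
  apply Rmult_le_reg_r with (Rabs h); [apply Rabs_pos_lt; auto|].
  rewrite Rmult_assoc, Rinv_l, Rmult_1_r by (apply Rabs_no_R0; auto). exact Hx.
Qed.

Lemma increment_l_along (F DF : R -> R -> R) psi dpsi v :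
  (forall s w, inI w -> is_derive (fun s => F s w) s (DF s w)) -> cont_I DF -> inI v ->
  is_deriv_01 psi v dpsi -> forall eps, 0 < eps ->
  exists d, 0 < d /\ forall h, h <> 0 -> inI (v + h) -> Rabs h < d ->
    Rabs (F (psi (v + h)) (v + h) - F (psi v) (v + h) - DF (psi v) v * (psi (v + h) - psi v))
      <= eps * Rabs h.
Proof.
  intros HF HDF Hv Hpsi eps Heps.
  set (K := Rabs dpsi + 1).
  assert (HK : 0 < K) by (unfold K; pose proof (Rabs_pos dpsi); lra).
  destruct (increment_l_uniform F DF (psi v) v HF HDF Hv (eps / K)) as [d1 [Hd1 Hinc]].
  { apply Rdiv_lt_0_compat; lra. }
  destruct (proj1 (is_deriv_01_epsilon _ _ _) Hpsi 1 Rlt_0_1) as [dp [Hdp Hquot]].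
  exists (Rmin (d1 / K) (Rmin d1 dp)).
  split; [repeat apply Rmin_pos; auto; apply Rdiv_lt_0_compat; lra|].
  intros h Hh0 Hvh Hh.
  assert (HhK := Rlt_le_trans _ _ _ Hh (Rmin_l _ _)).
  assert (Hh' := Rlt_le_trans _ _ _ Hh (Rmin_r _ _)).
  set (r := (psi (v + h) - psi v) / h).
  assert (HrK : Rabs r <= K).
  { assert (Hr := Hquot h Hh0 Hvh (Rlt_le_trans _ _ _ Hh' (Rmin_r _ _))). fold r in Hr.
    unfold K. replace r with ((r - dpsi) + dpsi) by ring.
    eapply Rle_trans; [apply Rabs_triang|]. lra. }
  assert (Hba : Rabs (psi (v + h) - psi v) <= K * Rabs h).
  { replace (psi (v + h) - psi v) with (r * h) by (unfold r; field; auto).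
    rewrite Rabs_mult. apply Rmult_le_compat_r; [apply Rabs_pos| auto]. }
  eapply Rle_trans.
  - apply Hinc; auto.
    + apply Rle_lt_trans with (K * Rabs h); auto.
      replace d1 with (K * (d1 / K)) by (field; lra). apply Rmult_lt_compat_l; auto.
    + replace (v + h - v) with h by ring. apply (Rlt_le_trans _ _ _ Hh' (Rmin_l _ _)).
  - replace (eps * Rabs h) with (eps / K * (K * Rabs h)) by (field; lra).
    apply Rmult_le_compat_l; auto. apply Rlt_le, Rdiv_lt_0_compat; lra.
Qed.

Lemma is_deriv_01_increment_l (F DF : R -> R -> R) psi dpsi v :
  (forall s w, inI w -> is_derive (fun s => F s w) s (DF s w)) -> cont_I DF -> inI v ->
  is_deriv_01 psi v dpsi ->
  is_deriv_01 (fun w => F (psi w) w - F (psi v) w) v (dpsi * DF (psi v) v).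
Proof.
  intros HF HDF Hv Hpsi.
  apply is_deriv_01_epsilon. intros eps Heps.
  set (D1 := DF (psi v) v). set (K1 := Rabs D1 + 1).
  assert (HK1 : 0 < K1) by (unfold K1; pose proof (Rabs_pos D1); lra).
  destruct (increment_l_along F DF psi dpsi v HF HDF Hv Hpsi (eps / 2)) as [d1 [Hd1 Hinc]].
  { lra. }
  destruct (proj1 (is_deriv_01_epsilon _ _ _) Hpsi (eps / (2 * K1))) as [dp [Hdp Hquot]].
  { apply Rdiv_lt_0_compat; lra. }
  exists (Rmin d1 dp). split; [apply Rmin_pos; auto|].
  intros h Hh0 Hvh Hh.
  set (r := (psi (v + h) - psi v) / h).
  assert (T1 := Rabs_div_le _ _ _ Hh0 (Hinc h Hh0 Hvh (Rlt_le_trans _ _ _ Hh (Rmin_l _ _)))).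
  assert (T2 : Rabs (D1 * (r - dpsi)) < eps / 2).
  { rewrite Rabs_mult. apply Rle_lt_trans with (K1 * Rabs (r - dpsi)).
    - apply Rmult_le_compat_r; [apply Rabs_pos| unfold K1; lra].
    - replace (eps / 2) with (K1 * (eps / (2 * K1))) by (field; lra).
      apply Rmult_lt_compat_l; auto. apply Hquot; auto.
      apply (Rlt_le_trans _ _ _ Hh (Rmin_r _ _)). }
  simpl. fold D1 in T1 |- *.
  replace ((F (psi (v + h)) (v + h) - F (psi v) (v + h) - (F (psi v) v - F (psi v) v)) / h
    - dpsi * D1) with
    ((F (psi (v + h)) (v + h) - F (psi v) (v + h) - D1 * (psi (v + h) - psi v)) / h
     + D1 * (r - dpsi)) by (unfold r; field; auto).
  eapply Rle_lt_trans; [apply Rabs_triang|]. lra.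
Qed.

Lemma is_deriv_01_comp_diag (F DF DvF : R -> R -> R) psi dpsi v :
  (forall s w, inI w -> is_derive (fun s => F s w) s (DF s w)) -> cont_I DF -> inI v ->
  is_deriv_01 (fun w => F (psi v) w) v (DvF (psi v) v) -> is_deriv_01 psi v dpsi ->
  is_deriv_01 (fun w => F (psi w) w) v (DvF (psi v) v + dpsi * DF (psi v) v).
Proof.
  intros HF HDF Hv HFv Hpsi.
  apply (is_deriv_01_ext (fun w => F (psi v) w + (F (psi w) w - F (psi v) w))); auto.
  { intros; ring. }
  apply is_deriv_01_plus; auto. apply is_deriv_01_increment_l; auto.
Qed.

Lemma ex_RInt_continuous_R (q : R -> R) a b :
  (forall x, continuous q x) -> @ex_RInt R_NormedModule q a b.
Proof. intros Hq. apply (ex_RInt_continuous (V := R_CompleteNormedModule)); auto. Qed.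

Lemma RInt_shift (q : R -> R) a b c : (forall x, continuous q x) ->
  RInt (fun t => q (t + c)) a b = RInt q (a + c) (b + c).
Proof.
  intros Hq.
  pose proof (RInt_comp_lin (V := R_CompleteNormedModule) q 1 c a b
    (ex_RInt_continuous_R q _ _ Hq)) as E.
  rewrite !Rmult_1_l in E. rewrite <- E. apply RInt_ext. intros x _.
  unfold scal; simpl; unfold mult; simpl. rewrite !Rmult_1_l. reflexivity.
Qed.

Lemma RInt_periodic (q : R -> R) p c : (forall x, continuous q x) ->
  (forall s, q (s + p) = q s) -> RInt (fun t => q (t + c)) 0 p = RInt q 0 p.
Proof.
  intros Hq Hp. rewrite RInt_shift, Rplus_0_l by auto.
  pose proof (ex_RInt_continuous_R q) as Hex.
  assert (E1 := RInt_Chasles (V := R_CompleteNormedModule) q c 0 p (Hex _ _ Hq) (Hex _ _ Hq)).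
  assert (E2 := RInt_Chasles (V := R_CompleteNormedModule) q c p (p + c) (Hex _ _ Hq) (Hex _ _ Hq)).
  assert (E3 := opp_RInt_swap (V := R_CompleteNormedModule) q 0 c (Hex _ _ Hq)).
  assert (Ep : RInt q p (p + c) = RInt q 0 c).
  { rewrite <- (Rplus_0_l p) at 1. rewrite (Rplus_comm p c), <- RInt_shift by auto.
    apply RInt_ext. intros; apply Hp. }
  simpl in *. unfold plus, opp in *; simpl in *.
  rewrite <- E2, Ep, <- E1, <- E3. ring.
Qed.

Lemma continuous_RInt_param h a b y : a <= b -> (forall x y, continuity_2d_pt h x y) ->
  continuous (fun v => RInt (fun t => h t v) a b) y.
Proof.
  intros Hab Hh. apply continuous_epsilon. intros eps Heps.
  assert (Hp : 0 < eps / (b - a + 1)) by (apply Rdiv_lt_0_compat; lra).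
  assert (Hex : forall v, @ex_RInt R_NormedModule (fun t => h t v) a b).
  { intros v. apply ex_RInt_continuous_R. intros t.
    apply continuity_2d_pt_continuous_l, Hh. }
  destruct (uniform_continuity_2d h a b (y - 1) (y + 1) (fun x y _ _ => Hh x y)
    (mkposreal _ Hp)) as [[del Hdel] Hunif]. simpl in Hunif.
  exists (Rmin del 1). split; [apply Rmin_pos; lra|].
  intros v Hv.
  assert (Hv1 := Rlt_le_trans _ _ _ Hv (Rmin_l _ _)).
  assert (Hv2 := Rlt_le_trans _ _ _ Hv (Rmin_r _ _)).
  apply Rabs_lt_between' in Hv2.
  rewrite <- (RInt_minus (V := R_CompleteNormedModule)) by apply Hex.
  eapply Rle_lt_trans.
  { apply abs_RInt_le_const with (M := eps / (b - a + 1)); auto.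
    - apply (ex_RInt_minus (V := R_NormedModule)); apply Hex.
    - intros t Ht. left. apply Hunif; try lra.
      rewrite Rminus_eq_0, Rabs_R0; lra. }
  apply Rlt_le_trans with ((b - a + 1) * (eps / (b - a + 1))).
  - apply Rmult_lt_compat_r; lra.
  - right. field. lra.
Qed.

(* Pythagoras: [F - M] is orthogonal to the constants on [[0, p]]. *)
Lemma RInt_sqr_offset (F : R -> R) (p a : R) : 0 < p -> (forall s, continuous F s) ->
  let M := / p * RInt F 0 p in
  RInt (fun s => (F s + a) ^ 2) 0 p = RInt (fun s => (F s - M) ^ 2) 0 p + p * (a + M) ^ 2.
Proof.
  intros Hp HF M.
  assert (HFM : p * M = RInt F 0 p) by (unfold M; field; lra).
  assert (Hsq : forall s, continuous (fun s => (F s - M) ^ 2) s).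
  { intros s. apply continuous_Rsqr.
    apply (continuous_Rplus F (fun _ => - M)); [apply HF| apply continuous_const]. }
  assert (Hlin : forall s, continuous (fun s => 2 * (a + M) * F s) s).
  { intros s. apply (continuous_Rmult (fun _ => 2 * (a + M)) F); [apply continuous_const| apply HF]. }
  transitivity (RInt (fun s => (F s - M) ^ 2 + (2 * (a + M) * F s + (a ^ 2 - M ^ 2))) 0 p).
  { apply RInt_ext. intros x _. simpl. ring. }
  rewrite (RInt_plus (V := R_CompleteNormedModule)).
  2: apply ex_RInt_continuous_R; auto.
  2: { apply (ex_RInt_plus (V := R_NormedModule)); apply ex_RInt_continuous_R; auto.
       intros; apply continuous_const. }
  rewrite (RInt_plus (V := R_CompleteNormedModule)).
  2: apply ex_RInt_continuous_R; auto.
  2: apply ex_RInt_continuous_R; intros; apply continuous_const.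
  rewrite (RInt_scal (V := R_CompleteNormedModule)) by (apply ex_RInt_continuous_R; auto).
  rewrite RInt_const, <- HFM. simpl. unfold plus, scal; simpl; unfold mult; simpl. ring.
Qed.

Lemma sumR_ext n a b : (forall k, (k < n)%nat -> a k = b k) -> sumR n a = sumR n b.
Proof.
  induction n as [|n IH]; simpl; intros Hab; auto.
  rewrite IH, Hab by (auto; intros; apply Hab; lia). reflexivity.
Qed.

Lemma sumR_plus n a b : sumR n (fun k => a k + b k) = sumR n a + sumR n b.
Proof. induction n as [|n IH]; simpl; [ring|]. rewrite IH; ring. Qed.

Lemma sumR_scal n c a : sumR n (fun k => c * a k) = c * sumR n a.
Proof. induction n as [|n IH]; simpl; [ring|]. rewrite IH; ring. Qed.

Lemma sumR_nonneg n a : (forall k, 0 <= a k) -> 0 <= sumR n a.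
Proof. induction n as [|n IH]; simpl; intros Ha; [lra|]. specialize (IH Ha). specialize (Ha n). lra. Qed.

Lemma dotn_ext n u u' w w' : (forall k, (k < n)%nat -> u k = u' k /\ w k = w' k) ->
  dotn n u w = dotn n u' w'.
Proof. intros H. apply sumR_ext. intros k Hk. destruct (H k Hk) as [-> ->]. reflexivity. Qed.

Lemma dotn_comm n u w : dotn n u w = dotn n w u.
Proof. apply sumR_ext. intros; ring. Qed.

Lemma dotn_scal_l n c u w : dotn n (scalev c u) w = c * dotn n u w.
Proof. unfold dotn, scalev. rewrite <- sumR_scal. apply sumR_ext. intros; ring. Qed.

Lemma dotn_scal_r n c u w : dotn n u (scalev c w) = c * dotn n u w.
Proof. rewrite dotn_comm, dotn_scal_l, dotn_comm. reflexivity. Qed.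

Lemma dotn_plus_r n u w w' : dotn n u (fun k => w k + w' k) = dotn n u w + dotn n u w'.
Proof. unfold dotn. rewrite <- sumR_plus. apply sumR_ext. intros; ring. Qed.

Lemma normn_sqr n u : normn n u ^ 2 = dotn n u u.
Proof.
  unfold normn. rewrite <- Rsqr_pow2. apply Rsqr_sqrt.
  apply sumR_nonneg. intros; apply Rle_0_sqr.
Qed.

Lemma normn_projT_unitv_sqr n D w : normn n D <> 0 ->
  normn n (projT n (unitv n D) w) ^ 2 = dotn n (unitv n D) w ^ 2.
Proof.
  intros HD. rewrite normn_sqr. unfold projT, unitv.
  rewrite dotn_scal_l, dotn_scal_r, !dotn_scal_l, !dotn_scal_r, (dotn_comm n w).
  rewrite <- normn_sqr. field. auto.
Qed.

Lemma is_pderivs_unique n F Dt Dv Dt' Dv' :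
  is_pderivs n F Dt Dv -> is_pderivs n F Dt' Dv' ->
  forall th v k, inI v -> (k < n)%nat -> Dt' th v k = Dt th v k /\ Dv' th v k = Dv th v k.
Proof.
  intros HD HD' th v k Hv Hk.
  destruct (HD th v Hv k Hk) as [Ht Hw]. destruct (HD' th v Hv k Hk) as [Ht' Hw'].
  split; [|exact (is_deriv_01_unique _ _ _ _ Hv Hw' Hw)].
  apply is_derive_unique in Ht. apply is_derive_unique in Ht'. congruence.
Qed.

Lemma reparam_is_pderivs n C Ct Cv phi dphi : C1_I n C Ct Cv -> C1_01 phi dphi ->
  is_pderivs n (reparam C phi) (fun th v k => Ct (th + phi v) v k)
    (fun th v k => Cv (th + phi v) v k + dphi v * Ct (th + phi v) v k).
Proof.
  intros [_ [HD Hcont]] [Hphi _] th v Hv k Hk. split.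
  - apply (is_derive_shift (fun s => C s v k)), (HD _ v Hv k Hk).
  - apply (is_deriv_01_comp_diag (fun s w => C s w k) (fun s w => Ct s w k)
      (fun s w => Cv s w k) (fun w => th + phi w)); auto.
    + intros s w Hw. apply (HD s w Hw k Hk).
    + apply Hcont; auto.
    + apply (HD _ v Hv k Hk).
    + apply is_deriv_01_plus_const, Hphi, Hv.
Qed.

Definition tangent_comp n (Ct Cv : R -> R -> nat -> R) th v :=
  dotn n (unitv n (Ct th v)) (Cv th v).

Definition tangent_mean n Ct Cv v :=
  / (2 * PI) * RInt (fun s => tangent_comp n Ct Cv s v) 0 (2 * PI).

Definition tangent_deviation n Ct Cv v :=
  RInt (fun th => (tangent_comp n Ct Cv th v - tangent_mean n Ct Cv v) ^ 2) 0 (2 * PI).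

Section Curve.

Variables (n : nat) (C Ct Cv : R -> R -> nat -> R) (l : R -> R).
Hypothesis HC : C1_I n C Ct Cv.
Hypothesis Hl_pos : forall v, inI v -> 0 < l v.
Hypothesis Hl_cont : cont_01 l.
Hypothesis Hspeed : forall th v, inI v -> normn n (Ct th v) = l v.

Let f := tangent_comp n Ct Cv.
Let M := tangent_mean n Ct Cv.
Let T := tangent_deviation n Ct Cv.

Lemma pderivs_periodic th v k : inI v -> (k < n)%nat ->
  Ct (th + 2 * PI) v k = Ct th v k /\ Cv (th + 2 * PI) v k = Cv th v k.
Proof.
  destruct HC as [Hper [HD _]]. intros Hv Hk.
  destruct (HD th v Hv k Hk) as [Ht Hw]. destruct (HD (th + 2 * PI) v Hv k Hk) as [Ht' Hw'].
  split.
  - apply is_derive_shift, (is_derive_ext _ (fun s => C s v k)) in Ht'; [|intros; apply Hper; auto].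
    apply is_derive_unique in Ht. apply is_derive_unique in Ht'. congruence.
  - apply (is_deriv_01_unique (fun w => C th w k) v); auto.
    apply (is_deriv_01_ext (fun w => C (th + 2 * PI) w k)); auto.
Qed.

Lemma tangent_comp_eq th v : inI v -> f th v = / l v * dotn n (Ct th v) (Cv th v).
Proof. intros Hv. unfold f, tangent_comp, unitv. rewrite dotn_scal_l, Hspeed; auto. Qed.

Lemma tangent_comp_periodic th v : inI v -> f (th + 2 * PI) v = f th v.
Proof.
  intros Hv. rewrite !tangent_comp_eq; auto. f_equal. apply dotn_ext.
  intros k Hk. apply pderivs_periodic; auto.
Qed.

Lemma continuity_2d_pt_tangent_comp_clamp x y :
  continuity_2d_pt (fun th v => f th (clamp v)) x y.
Proof.
  destruct HC as [_ [_ Hcont]].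
  apply continuity_2d_pt_ext with
    (f := fun th v => / l (clamp v) * sumR n (fun k => Ct th (clamp v) k * Cv th (clamp v) k)).
  { intros. rewrite tangent_comp_eq by apply inI_clamp. reflexivity. }
  apply continuity_2d_pt_mult.
  - apply continuity_2d_pt_inv.
    + apply continuity_2d_pt_continuous_r, cont_01_clamp, Hl_cont.
    + apply Rgt_not_eq, Hl_pos, inI_clamp.
  - apply continuity_2d_pt_sumR. intros k Hk.
    apply continuity_2d_pt_mult; apply (cont_I_clamp (fun th v => _ th v k)), Hcont; auto.
Qed.

Lemma continuous_tangent_comp th v : inI v -> continuous (fun th => f th v) th.
Proof.
  intros Hv. apply (continuous_ext (fun th => f th (clamp v))).
  - intros; rewrite clamp_id; auto.
  - apply (continuity_2d_pt_continuous_l (fun th v => f th (clamp v))).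
    apply continuity_2d_pt_tangent_comp_clamp.
Qed.

Lemma continuous_tangent_mean_clamp y : continuous (fun v => M (clamp v)) y.
Proof.
  apply (continuous_Rmult (fun _ => / (2 * PI))); [apply continuous_const|].
  apply (continuous_RInt_param (fun s v => f s (clamp v))).
  - pose proof PI_RGT_0; lra.
  - apply continuity_2d_pt_tangent_comp_clamp.
Qed.

Lemma continuous_tangent_deviation_clamp y : continuous (fun v => T (clamp v)) y.
Proof.
  apply (continuous_RInt_param (fun th v => (f th (clamp v) - M (clamp v)) ^ 2)).
  - pose proof PI_RGT_0; lra.
  - intros x z. apply continuity_2d_pt_mult.
    + apply continuity_2d_pt_minus; [apply continuity_2d_pt_tangent_comp_clamp|].
      apply continuity_2d_pt_continuous_r, continuous_tangent_mean_clamp.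
    + apply continuity_2d_pt_mult; [|apply continuity_2d_pt_const].
      apply continuity_2d_pt_minus; [apply continuity_2d_pt_tangent_comp_clamp|].
      apply continuity_2d_pt_continuous_r, continuous_tangent_mean_clamp.
Qed.

Lemma RInt_tangent_comp_shift v a c : inI v ->
  RInt (fun th => (f (th + c) v + a) ^ 2) 0 (2 * PI) = T v + 2 * PI * (a + M v) ^ 2.
Proof.
  intros Hv.
  rewrite (RInt_periodic (fun s => (f s v + a) ^ 2)).
  - apply RInt_sqr_offset; [pose proof PI_RGT_0; lra|].
    intros; apply continuous_tangent_comp; auto.
  - intros s. apply continuous_Rsqr.
    apply (continuous_Rplus (fun s => f s v)); [apply continuous_tangent_comp; auto|].
    apply continuous_const.
  - intros s. rewrite tangent_comp_periodic; auto.
Qed.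

Section Reparam.

Variables (phi dphi : R -> R) (Dt' Dv' : R -> R -> nat -> R).
Hypothesis Hphi : C1_01 phi dphi.
Hypothesis HD' : is_pderivs n (reparam C phi) Dt' Dv'.

Lemma reparam_integrand th v : inI v ->
  normn n (projT n (unitv n (Dt' th v)) (Dv' th v)) ^ 2 = (f (th + phi v) v + dphi v * l v) ^ 2.
Proof.
  intros Hv.
  pose proof (is_pderivs_unique _ _ _ _ _ _ (reparam_is_pderivs _ _ _ _ _ _ HC Hphi) HD')
    as Huniq.
  assert (Hspeed' : normn n (Dt' th v) = l v).
  { rewrite <- (Hspeed (th + phi v) v Hv). unfold normn. f_equal.
    apply dotn_ext. intros k Hk. destruct (Huniq th v k Hv Hk) as [-> _]. auto. }
  pose proof (Hl_pos v Hv) as Hlv.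
  rewrite normn_projT_unitv_sqr by lra. f_equal.
  unfold unitv. rewrite dotn_scal_l, Hspeed', tangent_comp_eq by auto.
  rewrite (dotn_ext n (Dt' th v) (Ct (th + phi v) v) (Dv' th v)
    (fun k => Cv (th + phi v) v k + scalev (dphi v) (Ct (th + phi v) v) k)).
  2: { intros k Hk. destruct (Huniq th v k Hv Hk) as [-> ->]. auto. }
  rewrite dotn_plus_r, dotn_scal_r, <- normn_sqr, Hspeed by auto. field. lra.
Qed.

Lemma energy_reparam :
  energy n Dt' Dv' = RInt (fun v => T v + 2 * PI * (dphi v * l v + M v) ^ 2) 0 1.
Proof.
  apply RInt_ext. intros v Hv.
  rewrite Rmin_left, Rmax_right in Hv by lra.
  assert (Hi : inI v) by (unfold inI; lra).
  rewrite <- RInt_tangent_comp_shift with (c := phi v) by auto.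
  apply RInt_ext. intros th _. apply reparam_integrand; auto.
Qed.

End Reparam.

Lemma ex_RInt_01_clamp (g : R -> R) :
  (forall v, continuous (fun v => g (clamp v)) v) -> @ex_RInt R_NormedModule g 0 1.
Proof.
  intros Hg. apply (ex_RInt_ext (fun v => g (clamp v))).
  - intros x Hx. rewrite Rmin_left, Rmax_right in Hx by lra.
    rewrite clamp_id; unfold inI; auto; lra.
  - apply ex_RInt_continuous_R; auto.
Qed.

Lemma energy_lower_bound phi dphi Dt' Dv' : C1_01 phi dphi ->
  is_pderivs n (reparam C phi) Dt' Dv' -> RInt T 0 1 <= energy n Dt' Dv'.
Proof.
  intros Hphi HD'. rewrite (energy_reparam phi dphi); auto.
  destruct Hphi as [_ [_ Hdphi]].
  apply RInt_le; [lra| apply ex_RInt_01_clamp, continuous_tangent_deviation_clamp| |].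
  - apply ex_RInt_01_clamp. intros v.
    apply continuous_Rplus; [apply continuous_tangent_deviation_clamp|].
    apply (continuous_Rmult (fun _ => 2 * PI)); [apply continuous_const|].
    apply continuous_Rsqr, continuous_Rplus; [apply continuous_Rmult|];
      auto using cont_01_clamp, continuous_tangent_mean_clamp.
  - intros v _. pose proof PI_RGT_0.
    assert (0 <= (dphi v * l v + M v) ^ 2) by (rewrite <- Rsqr_pow2; apply Rle_0_sqr).
    nra.
Qed.

(* The optimal [phi] solves [phi' l + M = 0]. *)
Lemma energy_optimal_reparam : exists phi dphi, C1_01 phi dphi /\
  energy n (fun th v k => Ct (th + phi v) v k)
    (fun th v k => Cv (th + phi v) v k + dphi v * Ct (th + phi v) v k) = RInt T 0 1.
Proof.
  set (psi := fun v => M (clamp v) * / l (clamp v)).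
  assert (Hpsi : forall v, continuous psi v).
  { intros v. apply continuous_Rmult; [apply continuous_tangent_mean_clamp|].
    apply continuous_Rinv_comp; [apply cont_01_clamp, Hl_cont|].
    apply Rgt_not_eq, Hl_pos, inI_clamp. }
  set (phi := fun v => - RInt psi 0 v).
  set (dphi := fun v => - psi v).
  assert (Hder : forall v, is_derive phi v (dphi v)).
  { intros v. apply (is_derive_opp (fun x => RInt psi 0 x)).
    apply (is_derive_RInt psi (fun x => RInt psi 0 x) 0); auto.
    exists (mkposreal 1 Rlt_0_1). intros y _.
    apply (RInt_correct (V := R_CompleteNormedModule)), ex_RInt_continuous_R; auto. }
  assert (Hphi : C1_01 phi dphi).
  { split; [|split]; [intros v _; apply is_derive_is_deriv_01; auto| |];
      apply cont_01_continuous; intros v.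
    - exact (ex_derive_continuous phi v (ex_intro _ (dphi v) (Hder v))).
    - exact (continuous_opp (V := R_NormedModule) psi v (Hpsi v)). }
  exists phi, dphi. split; auto.
  rewrite (energy_reparam phi dphi); auto using reparam_is_pderivs.
  apply RInt_ext. intros v Hv.
  rewrite Rmin_left, Rmax_right in Hv by lra.
  assert (Hi : inI v) by (unfold inI; lra).
  pose proof (Hl_pos v Hi).
  unfold dphi, psi. rewrite clamp_id by auto.
  replace (- (M v * / l v) * l v + M v) with 0 by (field; lra). simpl. ring.
Qed.

End Curve.

Theorem mainTheorem5 (n : nat) (C Ct Cv : R -> R -> nat -> R) (l : R -> R) :
  C1_I n C Ct Cv ->
  (forall v, inI v -> 0 < l v) -> cont_01 l ->
  (forall th v, inI v -> normn n (Ct th v) = l v) ->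
  let f := fun th v => dotn n (unitv n (Ct th v)) (Cv th v) in
  is_glb_Rbar
    (fun J => exists (phi dphi : R -> R) (Dt' Dv' : R -> R -> nat -> R),
       C1_01 phi dphi /\
       is_pderivs n (reparam C phi) Dt' Dv' /\
       J = energy n Dt' Dv')
    (Finite (int_I (fun th v =>
       (f th v - / (2 * PI) * RInt (fun s => f s v) 0 (2 * PI)) ^ 2))).
Proof.
  intros HC Hl_pos Hl_cont Hspeed f.
  change (int_I _) with (RInt (tangent_deviation n Ct Cv) 0 1).
  split.
  - intros J [phi [dphi [Dt' [Dv' [Hphi [HD' ->]]]]]].
    exact (energy_lower_bound n C Ct Cv l HC Hl_pos Hl_cont Hspeed phi dphi Dt' Dv' Hphi HD').
  - intros b Hb. apply Hb.
    destruct (energy_optimal_reparam n C Ct Cv l HC Hl_pos Hl_cont Hspeed)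
      as [phi [dphi [Hphi Henergy]]].
    exists phi, dphi, (fun th v k => Ct (th + phi v) v k),
      (fun th v k => Cv (th + phi v) v k + dphi v * Ct (th + phi v) v k).
    split; [exact Hphi|]. split; [exact (reparam_is_pderivs n C Ct Cv phi dphi HC Hphi)|].
    symmetry. exact Henergy.
Qed.
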